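(* Let $X=\{x_1,\dots,x_n\}\subset\mathbb{R}^d$, let $t>0$ and $\sigma\ge 0$, and let $\mathbf{H}_t$ be the heat kernel of a graph on $X$ as described in the context, with heat-geodesic dissimilarity $d_t$. Suppose that either $\sigma=0$, or the manifold has uniform volume growth in the sense that $(\mathbf{H}_t)_{ii}=(\mathbf{H}_t)_{jj}$ for all $i,j$. Suppose moreover that the heat kernel is pointwise monotonically decreasing in the sense that for all $x,y,z\in X$, $\|x-y\|_2>\|x-z\|_2$ implies $\mathbf{H}_t(x,y)<\mathbf{H}_t(x,z)$. Then for all triples $x,y,z\in X$, $\|x-y\|_2>\|x-z\|_2$ implies $d_t(x,y)>d_t(x,z)$; that is, the heat-geodesic dissimilarity is order preserving.
   Context: A weighted undirected graph on $X$ is given by a symmetric nonnegative weight matrix $\mathbf{W}\in\mathbb{R}^{n\times n}$ (e.g. $\mathbf{W}_{ij}=\kappa(x_i,x_j)$ for a kernel $\kappa$). Let $\mathbf{Q}$ be the diagonal degree matrix $\mathbf{Q}_{ii}=\sum_j\mathbf{W}_{ij}$, assumed $>0$. The graph Laplacian $\mathbf{L}$ is either the combinatorial Laplacian $\mathbf{Q}-\mathbf{W}$ or the symmetric normalized Laplacian $I_n-\mathbf{Q}^{-1/2}\mathbf{W}\mathbf{Q}^{-1/2}$, and the heat kernel is the matrix exponential $\mathbf{H}_t=e^{-t\mathbf{L}}$; we write $\mathbf{H}_t(x_i,x_j)=(\mathbf{H}_t)_{ij}$. Define $(\mathbf{V}_t)_{ij}=2\,[(\mathbf{H}_t)_{ii}+(\mathbf{H}_t)_{jj}]^{-1}$.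 The heat-geodesic dissimilarity is $d_t(x_i,x_j)=\left[-4t\log(\mathbf{H}_t)_{ij}-4\sigma t\log(\mathbf{V}_t)_{ij}\right]^{1/2}$ (logarithms taken entrywise), where it is assumed that the entries of $\mathbf{H}_t$ are positive and the bracketed quantity is nonnegative, so that $d_t$ is a well-defined real number. *)

From HB Require Import structures.
From mathcomp Require Import all_boot all_order all_algebra.
From mathcomp Require Import all_classical all_reals all_analysis.
Set Implicit Arguments. Unset Strict Implicit. Unset Printing Implicit Defensive.
Import Order.TTheory GRing.Theory Num.Theory.
Local Open Scope ring_scope.

Section HeatGeodesic.
Variables (R : realType) (n : nat).

Definition degree_mx (W : 'M[R]_n) : 'M[R]_n :=
  \matrix_(i, j) (if i == j then \sum_(k < n) W i k else 0).

Definition degree_invsqrt_mx (W : 'M[R]_n) : 'M[R]_n :=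
  \matrix_(i, j) (if i == j then (Num.sqrt (\sum_(k < n) W i k))^-1 else 0).

Inductive laplacian_kind := Combinatorial | SymNormalized.

Definition laplacian (lk : laplacian_kind) (W : 'M[R]_n) : 'M[R]_n :=
  match lk with
  | Combinatorial => degree_mx W - W
  | SymNormalized => 1%:M - degree_invsqrt_mx W *m W *m degree_invsqrt_mx W
  end.

(* matrix exponential e^A, entrywise limit of the partial sums of
   sum_k A^k / k! (this series converges absolutely for every square A) *)
Definition expmx (A : 'M[R]_n) : 'M[R]_n :=
  \matrix_(i, j)
    limn (fun N : nat => \sum_(k < N) (A ^+ k) i j / (k`!)%:R).

Definition heat_kernel (lk : laplacian_kind) (W : 'M[R]_n) (t : R) : 'M[R]_n :=
  expmx (- (t *: laplacian lk W)).

Definition volume_mx (H : 'M[R]_n) : 'M[R]_n :=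
  \matrix_(i, j) (2 / (H i i + H j j)).

Definition heat_geodesic_sq (lk : laplacian_kind) (W : 'M[R]_n) (t sigma : R)
    (i j : 'I_n) : R :=
  - 4 * t * ln (heat_kernel lk W t i j)
  - 4 * sigma * t * ln (volume_mx (heat_kernel lk W t) i j).

Definition heat_geodesic (lk : laplacian_kind) (W : 'M[R]_n) (t sigma : R)
    (i j : 'I_n) : R :=
  Num.sqrt (heat_geodesic_sq lk W t sigma i j).

End HeatGeodesic.

Definition eucl_dist (R : realType) (d : nat) (x y : 'rV[R]_d) : R :=
  Num.sqrt (\sum_(k < d) (x ord0 k - y ord0 k) ^+ 2).

From HB Require Import structures.
From mathcomp Require Import all_boot all_order all_algebra.
From mathcomp Require Import all_classical all_reals all_analysis.
Import Order.TTheory GRing.Theory Num.Theory.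
Local Open Scope ring_scope.

(* Under either hypothesis the volume term of d_t(x_i, x_j)^2 does not depend
   on j, so d_t(x_i, x_j)^2 is -4t ln H_t(x_i, x_j) up to a constant; since
   ln and the square root are increasing and t > 0, d_t reverses the order of
   the heat kernel, which in turn reverses the Euclidean order. *)

Lemma volume_mx_const_diag {R : realType} {n : nat} (H : 'M[R]_n) i j k :
  (forall i j, H i i = H j j) -> volume_mx H i j = volume_mx H i k.
Proof. by move=> Hdiag; rewrite !mxE (Hdiag j k). Qed.

Section HeatGeodesicOrder.
Context {R : realType} {n : nat} {lk : laplacian_kind} {W : 'M[R]_n}.
Context {t sigma : R}.

Local Notation H := (heat_kernel lk W t).

Lemma volume_term_eq i j k :
  sigma = 0 \/ (forall i j, H i i = H j j) ->
  sigma * ln (volume_mx H i j) = sigma * ln (volume_mx H i k).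
Proof.
by case=> [->|Hdiag]; rewrite ?mul0r // (volume_mx_const_diag H i j k Hdiag).
Qed.

Lemma heat_geodesic_sq_lt i j k :
  0 < t -> 0 < H i j -> H i j < H i k ->
  sigma * ln (volume_mx H i j) = sigma * ln (volume_mx H i k) ->
  heat_geodesic_sq lk W t sigma i k < heat_geodesic_sq lk W t sigma i j.
Proof.
move=> t_gt0 Hij_gt0 Hij_lt Hvol.
have Hik_gt0 : 0 < H i k by exact: lt_trans Hij_lt.
have ln_lt : ln (H i j) < ln (H i k) by rewrite ltr_ln ?posrE.
rewrite /heat_geodesic_sq -!(mulrA (4 * sigma)) -!(mulrCA t) -!mulrA Hvol.
by rewrite ltrD2r ltr_nM2l // ltr_pM2l.
Qed.

End HeatGeodesicOrder.

Theorem proposition1 (R : realType) (n d : nat) (X : 'I_n -> 'rV[R]_d)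
  (W : 'M[R]_n) (lk : laplacian_kind) (t sigma : R)
  (W_sym : forall i j, W i j = W j i)
  (W_ge0 : forall i j, 0 <= W i j)
  (Q_gt0 : forall i, 0 < \sum_(k < n) W i k)
  (t_gt0 : 0 < t) (sigma_ge0 : 0 <= sigma)
  (H_pos : forall i j, 0 < heat_kernel lk W t i j)
  (bracket_ge0 : forall i j, 0 <= heat_geodesic_sq lk W t sigma i j)
  (vol : sigma = 0 \/
         (forall i j, heat_kernel lk W t i i = heat_kernel lk W t j j))
  (mono : forall i j k, eucl_dist (X i) (X j) > eucl_dist (X i) (X k) ->
          heat_kernel lk W t i j < heat_kernel lk W t i k) :
  forall i j k, eucl_dist (X i) (X j) > eucl_dist (X i) (X k) ->
    heat_geodesic lk W t sigma i j > heat_geodesic lk W t sigma i k.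
Proof.
move=> i j k far.
have sq_lt : heat_geodesic_sq lk W t sigma i k < heat_geodesic_sq lk W t sigma i j.
  exact: heat_geodesic_sq_lt t_gt0 (H_pos i j) (mono i j k far)
    (volume_term_eq i j k vol).
rewrite /heat_geodesic ltr_sqrt //.
exact: le_lt_trans (bracket_ge0 i k) sq_lt.
Qed.
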